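(* Let $k\geq 3$ and let $n=4k-3$ be the number of vertices of the basket graph $\mathsf{B}_k$, with distance matrix $D$. Then there exists $\vec x\in\mathbb{R}^n$ such that $$\vec 1^\top\vec x=1,\qquad D\vec x=\frac{(-3)^k+4k-1}{8}\,\vec 1.$$
   Context: For a connected graph $G$ on vertices $v_1,\dots,v_n$, its distance matrix is $D=(d(v_i,v_j))_{i,j=1}^n$, where $d$ is the shortest-path distance; $\vec 1$ denotes the all-ones vector. Basket graph: for $k\geq1$, take disjoint copies of the path graphs $\mathsf{P}_k,\mathsf{P}_{k+1},\mathsf{P}_{k+1},\mathsf{P}_{k+1}$ ($\mathsf{P}_m$ is the path on $m$ vertices), and identify all four first endpoints into one vertex and all four last endpoints into another vertex (creating two vertices of degree four); the result is the $k$-th basket graph $\mathsf{B}_k$, with $4k-3$ vertices. *)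

From mathcomp Require Import all_boot all_order all_algebra.
From mathcomp Require Import reals.
Set Implicit Arguments. Unset Strict Implicit. Unset Printing Implicit Defensive.
Import GRing.Theory Num.Theory.

Fixpoint ball (T : finType) (e : rel T) (u : T) (m : nat) : {set T} :=
  if m is m'.+1 then ball e u m' :|: [set y | [exists x in ball e u m', e x y]]
  else [set u].

(* shortest-path distance: least m (< #|T|) such that v is within m steps of u.
   For a connected graph on T this is d(u,v). *)
Definition gdist (T : finType) (e : rel T) (u v : T) : nat :=
  find (fun m => v \in ball e u m) (iota 0 #|T|).

Definition distmx (R : pzRingType) (n : nat) (e : rel 'I_n) : 'M[R]_n :=
  \matrix_(i, j) ((gdist e i j)%:R)%R.

(* Basket graph B_k on vertices 0..4k-4: vertex 0 = common first endpoint,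
   vertex 1 = common last endpoint; the interior vertices of the copy of P_k
   are 2..k-1, those of the j-th copy of P_{k+1} (j=0,1,2) are
   k+j(k-1) .. k+j(k-1)+k-2. Each path is listed as a vertex sequence. *)
Definition basket_paths (k : nat) : seq (seq nat) :=
  (0 :: iota 2 (k - 2) ++ [:: 1])
  :: [seq 0 :: iota (k + j * (k - 1)) (k - 1) ++ [:: 1] | j <- iota 0 3].

Definition basket_edges (k : nat) : seq (nat * nat) :=
  flatten [seq zip p (behead p) | p <- basket_paths k].

Definition basket_adj (k : nat) : rel 'I_(4 * k - 3) :=
  fun u v => ((val u, val v) \in basket_edges k) || ((val v, val u) \in basket_edges k).
Arguments basket_adj k : clear implicits.

(* Give each vertex of B_k coordinates (i, p): the arm i (0 for the copy of P_k,
   1..3 for the copies of P_(k+1)) and the position p along it, counted from the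
   first hub.  Distances are |p - q| on one arm and min (p + q, (L_i - p) + (L_j - q))
   across arms, L_i being the length of arm i.  This closed form is the
   breadth-first distance because, as a function of the target, it vanishes only at
   the source, changes by at most one along edges, and drops along some edge at
   every other vertex.
   On an arm with m weighted vertices (all k vertices of the short arm, the k - 1
   interior vertices of a long one) put the palindromic weight
   ((-3)^q + (-3)^(m-1-q)) / 2 on the q-th one.  Along an arm, the second difference
   of v |-> (D x)_v is 2 x_v minus the weights of the vertices where the two routes
   around the basket tie, and the ratio -3 makes these cancel.  So D x is affine on
   every arm and takes the same value at both hubs, hence is constant; that value
   and 1^T x are geometric sums. *)

From mathcomp Require Import all_boot all_order all_algebra.
From mathcomp Require Import reals.
From mathcomp Require Import zify ring lra.
Set Implicit Arguments. Unset Strict Implicit. Unset Printing Implicit Defensive.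
Import GRing.Theory Num.Theory.

(** * Graph distance from a potential *)

Section DistancePotential.
Variables (T : finType) (e : rel T) (u : T) (f : T -> nat).
Hypothesis f_eq0 : forall v, (f v == 0) = (v == u).
Hypothesis f_edge : forall x y, e x y -> f y <= (f x).+1.
Hypothesis f_descent : forall y, 0 < f y -> exists2 x, e x y & f x < f y.

Lemma mem_ball_potential m v : (v \in ball e u m) = (f v <= m).
Proof.
elim: m v => [|m IH] v /=; first by rewrite in_set1 -f_eq0 leqn0.
rewrite in_setU in_set IH; apply/idP/idP.
  case/orP => [|/existsP [x /andP [hx exy]]]; first exact: leqW.
  by move: (f_edge exy); rewrite IH in hx; lia.
move=> hv; case: (leqP (f v) m) => //= hlt.
have [x exv hx] := f_descent (leq_ltn_trans (leq0n m) hlt).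
by apply/existsP; exists x; rewrite IH exv andbT; lia.
Qed.

Lemma find_iota_leq a s N : s <= a < s + N -> find (fun m => a <= m) (iota s N) = a - s.
Proof.
elim: N s => [|N IH] s h /=; first lia.
by case: ifP => h1; [lia | rewrite IH; lia].
Qed.

Lemma gdist_potential v : f v < #|T| -> gdist e u v = f v.
Proof.
move=> hv; rewrite /gdist (eq_find (a2 := fun m => f v <= m)).
  by rewrite find_iota_leq ?subn0 //; lia.
by move=> m; rewrite mem_ball_potential.
Qed.

End DistancePotential.

Ltac case_ifs := repeat match goal with |- context [if ?b then _ else _] =>
  lazymatch b with context [if _ then _ else _] => fail | _ =>
    let E := fresh "E" in case E: b; try move/eqP: E => E end end.

Lemma mem_zip_iota_path x y s n a b : 0 < n ->
  ((a, b) \in zip (x :: iota s n ++ [:: y]) (iota s n ++ [:: y])) =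
  [|| (a == x) && (b == s), (s <= a) && (b == a.+1) && (b < s + n)
    | (a == s + n - 1) && (b == y)].
Proof.
elim: n x s => [//|[|n] IH] x s _; first by rewrite /= !in_cons !xpair_eqE in_nil; lia.
by rewrite [iota _ _]/= [_ :: _ ++ _]/= [zip _ _]/= in_cons xpair_eqE IH //; lia.
Qed.

Definition arm_edge (s n a b : nat) : bool :=
  [|| (a == 0) && (b == s), (s <= a) && (b == a.+1) && (b < s + n)
    | (a == s + n - 1) && (b == 1)].

(* Position [q] on an arm whose interior vertices are [s], ..., [s + n - 1] and
   whose ends are the hubs [0] and [1]. *)
Definition arm_vertex (s n q : nat) : nat :=
  if q == 0 then 0 else if q == n.+1 then 1 else s + q - 1.

Lemma arm_edgeP s n a b : 0 < n ->
  reflect (exists2 q, q <= n & a = arm_vertex s n q /\ b = arm_vertex s n q.+1)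
          (arm_edge s n a b).
Proof.
move=> n_gt0; apply: (iffP idP) => [|[q le_qn [-> ->]]].
  case/or3P => /andP [] => [/eqP -> /eqP ->|/andP [le_sa /eqP ->] lt_b|/eqP -> /eqP ->].
  - by exists 0 => //; rewrite /arm_vertex /=; case_ifs; lia.
  - by exists (a - s).+1; rewrite /arm_vertex /=; [lia | case_ifs; lia].
  - by exists n => //; rewrite /arm_vertex /=; case_ifs; lia.
rewrite /arm_edge /arm_vertex; case_ifs; lia.
Qed.

(** * Coordinates on the basket graph *)

Section BasketCoordinates.
Variable k : nat.

Definition arm_len (i : nat) : nat := if i == 0 then k - 1 else k.
Definition arm_start (i : nat) : nat := if i == 0 then 2 else k + i.-1 * (k - 1).
Definition vertex_of (i q : nat) : nat := arm_vertex (arm_start i) (arm_len i - 1) q.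
Definition arm_of (v : nat) : nat :=
  if v < k then 0 else if v < 2 * k - 1 then 1 else if v < 3 * k - 2 then 2 else 3.
Definition pos_of (v : nat) : nat :=
  if v == 0 then 0 else if v == 1 then k - 1 else v + 1 - arm_start (arm_of v).

(* Each vertex has exactly one coordinate pair: the two hubs are only coded on
   arm 0, as positions 0 and k - 1; the long arms 1..3 keep their interior. *)
Definition is_coord (i p : nat) : bool :=
  ((i == 0) && (p <= k - 1)) || ((1 <= i <= 3) && (1 <= p <= k - 1)).

Definition coord_dist (i p j q : nat) : nat :=
  if i == j then (p - q) + (q - p) else minn (p + q) ((arm_len i - p) + (arm_len j - q)).

Ltac basket_lia :=
  cbv beta delta [coord_dist arm_len is_coord vertex_of arm_vertex arm_start arm_of pos_of];
  case_ifs; lia.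

Lemma coord_distC i p j q : coord_dist i p j q = coord_dist j q i p.
Proof. basket_lia. Qed.

Hypothesis k_ge3 : 3 <= k.

Lemma coord_dist_hub0 i p j : is_coord i p -> 1 <= j <= 3 -> coord_dist i p j 0 = coord_dist i p 0 0.
Proof. basket_lia. Qed.
Lemma coord_dist_hub1 i p j :
  is_coord i p -> 1 <= j <= 3 -> coord_dist i p j k = coord_dist i p 0 (k - 1).
Proof. basket_lia. Qed.
Lemma coord_dist_step i p j q : is_coord i p -> j <= 3 -> q < arm_len j ->
  coord_dist i p j q <= (coord_dist i p j q.+1).+1 /\
  coord_dist i p j q.+1 <= (coord_dist i p j q).+1.
Proof. basket_lia. Qed.
Lemma coord_dist_descent i p j q : is_coord i p -> is_coord j q -> 0 < q < arm_len j ->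
  (i, p) != (j, q) ->
  coord_dist i p j q.-1 < coord_dist i p j q \/ coord_dist i p j q.+1 < coord_dist i p j q.
Proof. rewrite xpair_eqE negb_and; basket_lia. Qed.
Lemma coord_dist_descent_hub0 i p : is_coord i p -> (i, p) != (0, 0) ->
  coord_dist i p i 1 < coord_dist i p 0 0.
Proof. rewrite xpair_eqE negb_and; basket_lia. Qed.
Lemma coord_dist_descent_hub1 i p : is_coord i p -> (i, p) != (0, k - 1) ->
  coord_dist i p i (arm_len i - 1) < coord_dist i p 0 (k - 1).
Proof. rewrite xpair_eqE negb_and; basket_lia. Qed.
Lemma coord_dist_eq0 i p j q : is_coord i p -> is_coord j q ->
  (coord_dist i p j q == 0) = ((i, p) == (j, q)).
Proof. rewrite xpair_eqE; basket_lia. Qed.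
Lemma coord_dist_le i p j q : is_coord i p -> is_coord j q -> coord_dist i p j q <= k.
Proof. basket_lia. Qed.

Lemma coord_dist_d2_long_short j p q : 1 <= j <= 3 -> 0 < p < k -> q < k ->
  coord_dist j (p - 1) 0 q + coord_dist j p.+1 0 q + ((q == k - 1 - p) + (q == k - p)) =
  2 * coord_dist j p 0 q.
Proof. basket_lia. Qed.
Lemma coord_dist_d2_long_same j p t : 1 <= j <= 3 -> 0 < p < k -> t < k - 1 ->
  coord_dist j (p - 1) j t.+1 + coord_dist j p.+1 j t.+1 =
  2 * coord_dist j p j t.+1 + 2 * (t == p - 1).
Proof. basket_lia. Qed.
Lemma coord_dist_d2_long_long j J p t :
  1 <= j <= 3 -> 1 <= J <= 3 -> j != J -> 0 < p < k -> t < k - 1 ->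
  coord_dist j (p - 1) J t.+1 + coord_dist j p.+1 J t.+1 + 2 * (t == k - 1 - p) =
  2 * coord_dist j p J t.+1.
Proof. basket_lia. Qed.
Lemma coord_dist_d2_short_short p q : 0 < p < k - 1 -> q < k ->
  coord_dist 0 (p - 1) 0 q + coord_dist 0 p.+1 0 q = 2 * coord_dist 0 p 0 q + 2 * (q == p).
Proof. basket_lia. Qed.
Lemma coord_dist_d2_short_long J p t : 1 <= J <= 3 -> 0 < p < k - 1 -> t < k - 1 ->
  coord_dist 0 (p - 1) J t.+1 + coord_dist 0 p.+1 J t.+1 + ((t == k - 2 - p) + (t == k - 1 - p)) =
  2 * coord_dist 0 p J t.+1.
Proof. basket_lia. Qed.

Lemma coord_dist_hub0_pos j q : is_coord j q -> coord_dist 0 0 j q = q.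
Proof. basket_lia. Qed.
Lemma coord_dist_hub1_pos j q : is_coord j q ->
  coord_dist 0 (k - 1) j q = arm_len j - q.
Proof. basket_lia. Qed.

Lemma vertex_of_lt j q : j <= 3 -> q <= arm_len j -> vertex_of j q < 4 * k - 3.
Proof. by case: j => [|[|[|[|j]]]]; basket_lia. Qed.
Lemma vertex_of_hub0 j : vertex_of j 0 = 0.
Proof. by []. Qed.
Lemma vertex_of_hub1 j : vertex_of j (arm_len j) = 1.
Proof. basket_lia. Qed.
Lemma vertex_ofK j q : is_coord j q -> arm_of (vertex_of j q) = j /\ pos_of (vertex_of j q) = q.
Proof.
case: j => [|[|[|[|j]]]] //=; rewrite /vertex_of /arm_vertex /arm_len /arm_start /=; basket_lia.
Qed.
Lemma arm_posK v : v < 4 * k - 3 -> vertex_of (arm_of v) (pos_of v) = v.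
Proof. rewrite /pos_of /arm_of; case_ifs; basket_lia. Qed.
Lemma is_coord_arm_pos v : v < 4 * k - 3 -> is_coord (arm_of v) (pos_of v).
Proof. basket_lia. Qed.

Definition basket_edge (a b : nat) : bool :=
  has (fun j => arm_edge (arm_start j) (arm_len j - 1) a b) (iota 0 4).

Lemma basket_edgeP a b :
  reflect (exists j q, [/\ j <= 3, q < arm_len j, a = vertex_of j q & b = vertex_of j q.+1])
          (basket_edge a b).
Proof.
have len_gt0 j : 0 < arm_len j - 1 by rewrite /arm_len; case: ifP; lia.
apply: (iffP hasP) => [[j] | [j [q [le_j3 lt_q -> ->]]]].
  rewrite mem_iota => /andP [_ lt_j4] /(@arm_edgeP _ _ _ _ (len_gt0 j)) [q le_q [-> ->]].
  by exists j, q; split => //; move: le_q; rewrite /arm_len; case: ifP; lia.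
exists j; first by rewrite mem_iota; lia.
by apply/arm_edgeP => //; exists q => //; move: lt_q; rewrite /arm_len; case: ifP; lia.
Qed.

Lemma mem_basket_edges a b : ((a, b) \in basket_edges k) = basket_edge a b.
Proof.
rewrite /basket_edges /basket_paths /basket_edge.
have -> : iota 0 3 = [:: 0; 1; 2] by [].
have [k1 k2] : 0 < k - 1 /\ 0 < k - 2 by lia.
rewrite !map_cons /flatten /= !mem_cat !mem_zip_iota_path //.
by rewrite /arm_edge /arm_start /arm_len /= in_nil !orbF (_ : k - 2 = k - 1 - 1) //; lia.
Qed.

Definition basket_link (a b : nat) : bool := basket_edge a b || basket_edge b a.

Lemma basket_linkC a b : basket_link a b = basket_link b a.
Proof. exact: orbC. Qed.

Lemma basket_adjE (u v : 'I_(4 * k - 3)) : basket_adj k u v = basket_link u v.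
Proof. by rewrite /basket_adj !mem_basket_edges. Qed.

Lemma basket_link_arm j q : j <= 3 -> q < arm_len j ->
  basket_link (vertex_of j q) (vertex_of j q.+1).
Proof. by move=> le_j3 lt_q; apply/orP; left; apply/basket_edgeP; exists j, q. Qed.

End BasketCoordinates.

Section BasketDistance.
Variable k : nat.
Hypothesis k_ge3 : 3 <= k.

Lemma coord_dist_vertex i p j q : is_coord k i p -> j <= 3 -> q <= arm_len k j ->
  coord_dist k i p (arm_of k (vertex_of k j q)) (pos_of k (vertex_of k j q)) =
  coord_dist k i p j q.
Proof.
move=> coord_ip le_j3 le_q.
have [/(vertex_ofK k_ge3) [-> ->] // | not_coord] := boolP (is_coord k j q).
have hub0 : arm_of k 0 = 0 /\ pos_of k 0 = 0.
  by have := vertex_ofK k_ge3 (isT : is_coord k 0 0); rewrite vertex_of_hub0.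
have hub1 : arm_of k 1 = 0 /\ pos_of k 1 = k - 1.
  have coord_hub1 : is_coord k 0 (k - 1) by rewrite /is_coord /=; lia.
  by have := vertex_ofK k_ge3 coord_hub1; rewrite -[k - 1]/(arm_len k 0) vertex_of_hub1.
have [j_gt0 [->|->]] : 0 < j /\ (q = 0 \/ q = k).
- by move: not_coord le_q; rewrite /is_coord /arm_len; case: ifP; lia.
- by rewrite vertex_of_hub0 hub0.1 hub0.2 coord_dist_hub0 //; lia.
have len_j : arm_len k j = k by rewrite /arm_len; case: ifP; lia.
have := vertex_of_hub1 k_ge3 j; rewrite len_j => ->.
by rewrite hub1.1 hub1.2 coord_dist_hub1 //; lia.
Qed.

Lemma coord_closer_neighbour i p j q : is_coord k i p -> is_coord k j q -> (i, p) != (j, q) ->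
  exists j' q', [/\ j' <= 3, q' <= arm_len k j',
    basket_link k (vertex_of k j' q') (vertex_of k j q)
    & coord_dist k i p j' q' < coord_dist k i p j q].
Proof.
move=> coord_ip coord_jq ne_ij.
have le_i3 : i <= 3 by move: coord_ip; rewrite /is_coord; lia.
have len_gt1 : 1 < arm_len k i by rewrite /arm_len; case: ifP; lia.
have [q0 | q_gt0] := posnP q.
  have j0 : j = 0 by move: coord_jq; rewrite /is_coord q0; lia.
  subst q j; exists i, 1; split; [lia | lia | | exact: coord_dist_descent_hub0].
  have -> : vertex_of k 0 0 = vertex_of k i 0 by [].
  by rewrite basket_linkC; apply: basket_link_arm; lia.
have [qL | ltq] := eqVneq q (arm_len k j).
  have [j0 qk] : j = 0 /\ q = k - 1.
    by move: coord_jq qL; rewrite /is_coord /arm_len; case: ifP; lia.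
  rewrite {}qk {}j0 in ne_ij *; clear qL.
  exists i, (arm_len k i - 1); split; [lia | lia | | exact: coord_dist_descent_hub1].
  have -> : vertex_of k 0 (k - 1) = vertex_of k i (arm_len k i).
    by rewrite -[k - 1]/(arm_len k 0) !vertex_of_hub1.
  by rewrite -[in X in basket_link _ _ X](subnK (ltnW len_gt1)) addn1; apply: basket_link_arm; lia.
have le_j3 : j <= 3 by move: coord_jq; rewrite /is_coord; lia.
have lt_q : q < arm_len k j.
  by move: coord_jq ltq; rewrite /is_coord /arm_len; case: ifP; lia.
case: (coord_dist_descent k_ge3 coord_ip coord_jq _ ne_ij) => [|closer|closer]; first lia.
  exists j, q.-1; split => //; first lia.
  by rewrite -{2}(prednK q_gt0); apply: basket_link_arm; lia.
by exists j, q.+1; split => //; rewrite basket_linkC; apply: basket_link_arm.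
Qed.

Lemma gdist_basket (u v : 'I_(4 * k - 3)) :
  gdist (basket_adj k) u v = coord_dist k (arm_of k u) (pos_of k u) (arm_of k v) (pos_of k v).
Proof.
have coord_v (w : 'I_(4 * k - 3)) := is_coord_arm_pos k_ge3 (ltn_ord w).
apply: (gdist_potential
  (f := fun w : 'I_(4 * k - 3) => coord_dist k (arm_of k u) (pos_of k u) (arm_of k w) (pos_of k w)))
  => [w | x y | y | ] /=.
- rewrite coord_dist_eq0 // eq_sym; apply/eqP/eqP => [[ea ep] | -> //].
  by apply: val_inj; rewrite /= -(arm_posK k_ge3 (ltn_ord u)) -(arm_posK k_ge3 (ltn_ord w)) ea ep.
- rewrite basket_adjE // /basket_link => /orP [] /(basket_edgeP k_ge3) [j [q [le_j3 lt_q -> ->]]];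
    rewrite !coord_dist_vertex //; have := coord_dist_step k_ge3 (coord_v u) le_j3 lt_q; lia.
- rewrite lt0n coord_dist_eq0 // => ne_uy.
  have [j [q [le_j3 le_q link closer]]] := coord_closer_neighbour (coord_v u) (coord_v y) ne_uy.
  exists (Ordinal (vertex_of_lt k_ge3 le_j3 le_q)); last by rewrite /= coord_dist_vertex.
  by rewrite basket_adjE //=; rewrite arm_posK in link.
- by rewrite card_ord; have := coord_dist_le k_ge3 (coord_v u) (coord_v v); lia.
Qed.

End BasketDistance.

(** * The weight vector *)

Local Open Scope ring_scope.

Section NatWeightedSums.
Variable R : comPzRingType.
Implicit Types (w : nat -> R) (n t : nat).

Lemma sum_nat_indicator n t w : (t < n)%N -> \sum_(0 <= q < n) (q == t)%:R * w q = w t.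
Proof.
move=> lt_tn; transitivity (\sum_(0 <= q < n | q == t) w q); last by rewrite big_nat1_eq /= lt_tn.
by rewrite [RHS]big_mkcond; apply: eq_bigr => q _; case: (q == t); rewrite ?mul1r ?mul0r.
Qed.

Lemma sum_nat_indicatorM n t m w : (t < n)%N ->
  \sum_(0 <= q < n) (m * (q == t))%:R * w q = m%:R * w t.
Proof.
move=> lt_tn; rewrite -(sum_nat_indicator w lt_tn) mulr_sumr.
by apply: eq_bigr => q _; rewrite natrM mulrA.
Qed.

Lemma sum_nat_indicator2 n t1 t2 w : (t1 < n)%N -> (t2 < n)%N ->
  \sum_(0 <= q < n) ((q == t1) + (q == t2))%:R * w q = w t1 + w t2.
Proof.
move=> lt1 lt2; rewrite -(sum_nat_indicator w lt1) -(sum_nat_indicator w lt2) -big_split.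
by apply: eq_bigr => q _; rewrite natrD mulrDl.
Qed.

Lemma sum_natr0 n w : \sum_(0 <= q < n) (0%N)%:R * w q = 0.
Proof. by rewrite big1 // => q _; rewrite mul0r. Qed.

Lemma sum_nat_balance n (a b c P N : nat -> nat) w :
  (forall q, (q < n)%N -> (a q + b q + N q = 2 * c q + P q)%N) ->
  \sum_(0 <= q < n) (a q)%:R * w q + \sum_(0 <= q < n) (b q)%:R * w q =
  2 * \sum_(0 <= q < n) (c q)%:R * w q + \sum_(0 <= q < n) (P q)%:R * w q
    - \sum_(0 <= q < n) (N q)%:R * w q.
Proof.
move=> balance; rewrite -big_split mulr_sumr -big_split -sumrB /=.
apply: eq_big_nat => q /andP [_ lt_qn].
have e : (a q + b q + N q)%:R = (2 * c q + P q)%:R :> R by rewrite balance.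
rewrite !natrD in e.
by rewrite -[_ * w q + _](addrK ((N q)%:R * w q)) -!mulrDl e; ring.
Qed.

Lemma geometric_sum (r : R) m : (1 - r) * \sum_(0 <= q < m) r ^+ q = 1 - r ^+ m.
Proof.
elim: m => [|m IH]; first by rewrite big_geq // mulr0 expr0 subrr.
by rewrite big_nat_recr //= mulrDr IH exprS; ring.
Qed.

Lemma sum_palindrome m (g h : nat -> R) C :
  (forall q, (q < m)%N -> h q + h (m - 1 - q)%N = C) ->
  \sum_(0 <= q < m) h q * (g q + g (m - 1 - q)%N) = C * \sum_(0 <= q < m) g q.
Proof.
move=> hsym.
have rev : \sum_(0 <= q < m) h q * g (m - 1 - q)%N = \sum_(0 <= q < m) h (m - 1 - q)%N * g q.
  rewrite big_nat_rev /=; apply: eq_big_nat => q /andP [_ lt_qm].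
  by congr (h _ * g _); lia.
under eq_bigr do rewrite mulrDr.
rewrite big_split /= rev -big_split mulr_sumr; apply: eq_big_nat => q /andP [_ lt_qm].
by rewrite /= -mulrDl hsym.
Qed.

End NatWeightedSums.

Lemma discrete_harmonic_const (R : numDomainType) (f : nat -> R) L :
  (0 < L)%N -> f 0%N = f L ->
  (forall p, (0 < p < L)%N -> f (p - 1)%N + f p.+1 = 2 * f p) ->
  forall p, (p <= L)%N -> f p = f 0%N.
Proof.
move=> L_gt0 f0L harmonic.
pose d := f 1%N - f 0%N.
have affine p : (p < L)%N -> f p = f 0%N + p%:R * d /\ f p.+1 = f 0%N + p.+1%:R * d.
  elim: p => [|p IH] lt_pL; first by rewrite mul0r addr0 mul1r /d addrC subrK.
  have [fp fp1] := IH (ltnW lt_pL); split => //.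
  have := harmonic p.+1; rewrite subn1 /= => /(_ lt_pL) h.
  have -> : f p.+2 = 2 * f p.+1 - f p by rewrite -h; ring.
  by rewrite fp fp1 -!natr1; ring.
have := affine L.-1; rewrite ltn_predL prednK // -f0L => /(_ L_gt0) [_ fL].
have /eqP : L%:R * d = 0 by apply: (addrI (f 0%N)); rewrite addr0 -fL.
rewrite mulf_eq0 pnatr_eq0 gtn_eqF //= => /eqP d0.
move=> p; rewrite leq_eqVlt => /orP [/eqP -> // | lt_pL].
by have [-> _] := affine p lt_pL; rewrite d0 mulr0 addr0.
Qed.

Section BasketWeights.
Variable R : realFieldType.
Variable k : nat.
Hypothesis k_ge3 : (3 <= k)%N.

Definition basket_weight (m q : nat) : R := ((-3) ^+ q + (-3) ^+ (m - 1 - q)) / 2.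

Lemma sum_basket_weight m (h : nat -> R) C :
  (forall q, (q < m)%N -> h q + h (m - 1 - q)%N = C) ->
  \sum_(0 <= q < m) h q * basket_weight m q = C * (1 - (-3) ^+ m) / 8.
Proof.
move=> hsym; rewrite -(geometric_sum (-3 : R) m).
transitivity ((\sum_(0 <= q < m) h q * ((-3) ^+ q + (-3) ^+ (m - 1 - q))) / 2).
  by rewrite mulr_suml; apply: eq_bigr => q _; rewrite /basket_weight mulrA.
by rewrite (sum_palindrome _ hsym); field.
Qed.

Lemma exprN3_pred n : (0 < n)%N -> (-3 : R) ^+ n = -3 * (-3) ^+ (n - 1).
Proof. by move=> n_gt0; rewrite -exprS; congr (_ ^+ _); lia. Qed.

Lemma basket_weight_balance_long p : (0 < p < k)%N ->
  2 * basket_weight (k - 1) (p - 1) - 4 * basket_weight (k - 1) (k - 1 - p) =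
  basket_weight k (k - 1 - p) + basket_weight k (k - p).
Proof.
move=> hp; rewrite /basket_weight.
rewrite (_ : (k - 1 - 1 - (p - 1) = k - 1 - p)%N); last lia.
rewrite (_ : (k - 1 - 1 - (k - 1 - p) = p - 1)%N); last lia.
rewrite (_ : (k - 1 - (k - 1 - p) = p)%N); last lia.
rewrite (_ : (k - 1 - (k - p) = p - 1)%N); last lia.
rewrite (exprN3_pred (n := p)) ?(exprN3_pred (n := (k - p)%N)); try lia.
rewrite (_ : (k - p - 1 = k - 1 - p)%N); last lia.
lra.
Qed.

Lemma basket_weight_balance_short p : (0 < p < k - 1)%N ->
  2 * basket_weight k p =
  3 * (basket_weight (k - 1) (k - 2 - p) + basket_weight (k - 1) (k - 1 - p)).
Proof.
move=> hp; rewrite /basket_weight.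
rewrite (_ : (k - 1 - 1 - (k - 2 - p) = p)%N); last lia.
rewrite (_ : (k - 1 - 1 - (k - 1 - p) = p - 1)%N); last lia.
rewrite (exprN3_pred (n := p)) ?(exprN3_pred (n := (k - 1 - p)%N)); try lia.
rewrite (_ : (k - 1 - p - 1 = k - 2 - p)%N); last lia.
lra.
Qed.

Definition coord_sum (g : nat -> nat -> R) : R :=
  \sum_(0 <= q < k) g 0%N q + \sum_(0 <= t < (k - 1)%N) g 1%N t.+1
  + \sum_(0 <= t < (k - 1)%N) g 2%N t.+1 + \sum_(0 <= t < (k - 1)%N) g 3%N t.+1.

Definition coord_weight (i p : nat) : R :=
  if i == 0%N then basket_weight k p else basket_weight (k - 1) p.-1.

Definition Dx (i p : nat) : R :=
  coord_sum (fun j q => (coord_dist k i p j q)%:R * coord_weight j q).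

Let short_sum i p := \sum_(0 <= q < k) (coord_dist k i p 0 q)%:R * basket_weight k q.
Let long_sum i p j :=
  \sum_(0 <= t < (k - 1)%N) (coord_dist k i p j t.+1)%:R * basket_weight (k - 1) t.

Lemma DxE i p : Dx i p = short_sum i p + long_sum i p 1 + long_sum i p 2 + long_sum i p 3.
Proof. by []. Qed.

Lemma short_sum_d2_long j p : (1 <= j <= 3)%N -> (0 < p < k)%N ->
  short_sum j (p - 1) + short_sum j p.+1 =
  2 * short_sum j p - (basket_weight k (k - 1 - p) + basket_weight k (k - p)).
Proof.
move=> hj hp; rewrite (sum_nat_balance (c := fun q => coord_dist k j p 0 q) (P := fun=> 0%N)
  (N := fun q => (q == k - 1 - p) + (q == k - p))%N); last first.
  by move=> q hq; rewrite addn0 coord_dist_d2_long_short.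
by rewrite sum_natr0 addr0 sum_nat_indicator2 //; lia.
Qed.

Lemma long_sum_d2 j J p : (1 <= j <= 3)%N -> (1 <= J <= 3)%N -> (0 < p < k)%N ->
  long_sum j (p - 1) J + long_sum j p.+1 J =
  2 * long_sum j p J +
  (if j == J then 2 * basket_weight (k - 1) (p - 1)
   else - (2 * basket_weight (k - 1) (k - 1 - p))).
Proof.
move=> hj hJ hp; have [<- | ne_jJ] := eqVneq j J.
  rewrite (sum_nat_balance (c := fun t => coord_dist k j p j t.+1) (N := fun=> 0%N)
    (P := fun t => 2 * (t == p - 1))%N); last first.
    by move=> t ht; rewrite addn0 coord_dist_d2_long_same.
  by rewrite sum_natr0 subr0 sum_nat_indicatorM //; lia.
rewrite (sum_nat_balance (c := fun t => coord_dist k j p J t.+1) (P := fun=> 0%N)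
  (N := fun t => 2 * (t == k - 1 - p))%N); last first.
  by move=> t ht; rewrite addn0 coord_dist_d2_long_long.
by rewrite sum_natr0 addr0 sum_nat_indicatorM //; lia.
Qed.

Lemma short_sum_d2_short p : (0 < p < k - 1)%N ->
  short_sum 0 (p - 1) + short_sum 0 p.+1 = 2 * short_sum 0 p + 2 * basket_weight k p.
Proof.
move=> hp; rewrite (sum_nat_balance (c := fun q => coord_dist k 0 p 0 q) (N := fun=> 0%N)
  (P := fun q => 2 * (q == p))%N); last first.
  by move=> q hq; rewrite addn0 coord_dist_d2_short_short.
by rewrite sum_natr0 subr0 sum_nat_indicatorM //; lia.
Qed.

Lemma long_sum_d2_short J p : (1 <= J <= 3)%N -> (0 < p < k - 1)%N ->
  long_sum 0 (p - 1) J + long_sum 0 p.+1 J =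
  2 * long_sum 0 p J - (basket_weight (k - 1) (k - 2 - p) + basket_weight (k - 1) (k - 1 - p)).
Proof.
move=> hJ hp; rewrite (sum_nat_balance (c := fun t => coord_dist k 0 p J t.+1) (P := fun=> 0%N)
  (N := fun t => (t == k - 2 - p) + (t == k - 1 - p))%N); last first.
  by move=> t ht; rewrite addn0 coord_dist_d2_short_long.
by rewrite sum_natr0 addr0 sum_nat_indicator2 //; lia.
Qed.

Lemma Dx_d2_long j p : (1 <= j <= 3)%N -> (0 < p < k)%N ->
  Dx j (p - 1) + Dx j p.+1 = 2 * Dx j p.
Proof.
move=> hj hp; rewrite !DxE.
have := short_sum_d2_long hj hp; have := basket_weight_balance_long hp.
have := long_sum_d2 (J := 1) hj isT hp; have := long_sum_d2 (J := 2) hj isT hp.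
have := long_sum_d2 (J := 3) hj isT hp.
by case/andP: hj; case: j => [|[|[|[|j]]]] //= _ _; lra.
Qed.

Lemma Dx_d2_short p : (0 < p < k - 1)%N -> Dx 0 (p - 1) + Dx 0 p.+1 = 2 * Dx 0 p.
Proof.
move=> hp; rewrite !DxE.
have := short_sum_d2_short hp; have := basket_weight_balance_short hp.
have := long_sum_d2_short (J := 1) isT hp; have := long_sum_d2_short (J := 2) isT hp.
have := long_sum_d2_short (J := 3) isT hp.
lra.
Qed.

Lemma Dx_congr i p i' p' :
  (forall j q, is_coord k j q -> coord_dist k i p j q = coord_dist k i' p' j q) ->
  Dx i p = Dx i' p'.
Proof.
move=> same_dist; rewrite /Dx /coord_sum.
by congr (_ + _ + _ + _); apply: eq_big_nat => q hq; rewrite same_dist // /is_coord; lia.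
Qed.

Lemma Dx_palindromic i p :
  (forall q, (q < k)%N -> (coord_dist k i p 0 q + coord_dist k i p 0 (k - 1 - q) = k - 1)%N) ->
  (forall j t, (1 <= j <= 3)%N -> (t < k - 1)%N ->
     (coord_dist k i p j t.+1 + coord_dist k i p j (k - 1 - 1 - t).+1 = k)%N) ->
  Dx i p = ((-3) ^+ k + (4 * k)%:R - 1) / 8.
Proof.
move=> short_sym long_sym; rewrite DxE /short_sum /long_sum.
rewrite (sum_basket_weight (C := (k - 1)%:R)) => [|q lt_qk]; last by rewrite -natrD short_sym.
rewrite !(sum_basket_weight (C := k%:R)) => [|t lt_t|t lt_t|t lt_t]; try by rewrite -natrD long_sym.
rewrite natrB ?natrM ?(exprN3_pred (n := k)); try lia.
by field.
Qed.

Lemma Dx_hub0 : Dx 0 0 = ((-3) ^+ k + (4 * k)%:R - 1) / 8.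
Proof.
apply: Dx_palindromic => [q lt_qk | j t hj lt_t]; rewrite !coord_dist_hub0_pos /is_coord; lia.
Qed.

Lemma Dx_hub1 : Dx 0 (k - 1) = ((-3) ^+ k + (4 * k)%:R - 1) / 8.
Proof.
apply: Dx_palindromic => [q lt_qk | j t hj lt_t];
  rewrite !coord_dist_hub1_pos /is_coord ?/arm_len /=; try case: ifP; lia.
Qed.

Lemma Dx_const i p : is_coord k i p -> Dx i p = ((-3) ^+ k + (4 * k)%:R - 1) / 8.
Proof.
case/orP => [/andP [/eqP -> le_p] | /andP [hi hp]].
  rewrite -Dx_hub0 (discrete_harmonic_const (L := (k - 1)%N)) //; first lia.
  - by rewrite Dx_hub0 Dx_hub1.
  - by move=> q hq; apply: Dx_d2_short.
have hub0 : Dx i 0 = Dx 0 0.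
  by apply: Dx_congr => j q hjq; rewrite coord_distC coord_dist_hub0 // coord_distC.
have hub1 : Dx i k = Dx 0 (k - 1).
  by apply: Dx_congr => j q hjq; rewrite coord_distC coord_dist_hub1 // coord_distC.
rewrite -Dx_hub0 -hub0 (discrete_harmonic_const (L := k)) //; first lia.
- by rewrite hub0 hub1 Dx_hub0 Dx_hub1.
- by move=> q hq; apply: Dx_d2_long.
- lia.
Qed.

Lemma coord_weight_sum : coord_sum coord_weight = 1.
Proof.
have weight_sum m : \sum_(0 <= q < m) basket_weight m q = 2 * (1 - (-3) ^+ m) / 8.
  by rewrite -(sum_basket_weight (h := fun=> 1)) //; apply: eq_bigr => q _; rewrite mul1r.
rewrite /coord_sum /coord_weight /= !weight_sum (exprN3_pred (n := k)); last lia.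
by field.
Qed.

Lemma sum_basket_vertices (g : nat -> nat -> R) :
  \sum_(0 <= v < 4 * k - 3) g (arm_of k v) (pos_of k v) = coord_sum g.
Proof.
have shift a m (F : nat -> R) : \sum_(a <= v < a + m) F v = \sum_(0 <= t < m) F (t + a)%N.
  by rewrite -{1}(add0n a) big_addn addKn.
rewrite (_ : (4 * k - 3 = k + (k - 1) + (k - 1) + (k - 1))%N); last lia.
rewrite (big_cat_nat _ (n := (k + (k - 1) + (k - 1))%N)); [|lia|lia].
rewrite (big_cat_nat _ (n := (k + (k - 1))%N)); [|lia|lia].
rewrite (big_cat_nat _ (n := k)); [|lia|lia].
rewrite (shift k) (shift (k + (k - 1))%N) (shift (k + (k - 1) + (k - 1))%N) /coord_sum.
congr (_ + _ + _ + _); last 3 first.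
- by apply: eq_big_nat => t ht; rewrite /pos_of /arm_of /arm_start; case_ifs; congr (g _ _); lia.
- by apply: eq_big_nat => t ht; rewrite /pos_of /arm_of /arm_start; case_ifs; congr (g _ _); lia.
- by apply: eq_big_nat => t ht; rewrite /pos_of /arm_of /arm_start; case_ifs; congr (g _ _); lia.
rewrite (eq_big_nat _ _ (F2 := fun v => g 0%N (pos_of k v))); last first.
  by move=> v /andP [_ lt_vk]; rewrite /arm_of lt_vk.
rewrite big_ltn; last lia.
rewrite big_ltn; last lia.
rewrite [RHS]big_ltn; last lia.
rewrite -[X in \sum_(1 <= _ < X) _](@subnK 1 k); last lia.
rewrite addn1 big_nat_recr /=; last lia.
have -> : pos_of k 1 = k.-1 by rewrite /pos_of /= subn1.
rewrite (big_add1 _ _ 1%N) /= addrA addrAC [RHS]addrA subn1; congr (_ + _ + _).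
by apply: eq_big_nat => v hv; rewrite /pos_of /arm_of /arm_start; case_ifs; congr (g _ _); lia.
Qed.

End BasketWeights.

Theorem lemma2p2 (R : realType) (k : nat) (hk : (3 <= k)%N) :
  exists x : 'cV[R]_(4 * k - 3),
    (const_mx 1)^T *m x = 1%:M /\
    distmx R (basket_adj k) *m x
      = (((-3) ^+ k + (4 * k)%:R - 1) / 8) *: const_mx 1.
Proof.
exists (\col_(v < 4 * k - 3) coord_weight R k (arm_of k v) (pos_of k v)); split.
  apply/matrixP => a b; rewrite !mxE (ord1 a) (ord1 b) /=.
  under eq_bigr do rewrite !mxE mul1r.
  rewrite -(big_mkord xpredT (fun v => coord_weight R k (arm_of k v) (pos_of k v))).
  by rewrite sum_basket_vertices // coord_weight_sum.
apply/matrixP => a b; rewrite !mxE (ord1 b) mulr1.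
under eq_bigr do rewrite !mxE gdist_basket //.
pose g J Q := (coord_dist k (arm_of k a) (pos_of k a) J Q)%:R * coord_weight R k J Q.
rewrite -(big_mkord xpredT (fun v => g (arm_of k v) (pos_of k v))) sum_basket_vertices //.
exact: Dx_const (is_coord_arm_pos hk (ltn_ord a)).
Qed.
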